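(* There is an absolute constant $c>0$ such that for all $\varepsilon\in(0,\tfrac18)$, $$\mathsf C_{\det}(\varepsilon;\mathsf O^{0^{\rm th}+1^{\rm st}})\ge \mathsf C_{\rm rand}(\varepsilon;\mathsf O^{0^{\rm th}+1^{\rm st}})\ge c\log\frac1\varepsilon.$$
   Context: A function $f:\mathbb R^d\to\mathbb R$ is $\beta$-smooth if it is continuously differentiable and $\nabla f$ is $\beta$-Lipschitz. A point $x$ is an $\varepsilon$-stationary point of $f$ if $\|\nabla f(x)\|<\varepsilon$. Let $\mathcal F(\beta,\Delta,d)$ be the class of $\beta$-smooth $f:\mathbb R^d\to\mathbb R$ with $f(0)-\inf f\le\Delta$. The oracle $\mathsf O^{1^{\rm st}}$ returns $\nabla f(x)$ on query $x$; the oracle $\mathsf O^{0^{\rm th}+1^{\rm st}}$ returns $(f(x),\nabla f(x))$. A deterministic algorithm chooses queries $x_1,x_2,\dots\in\mathbb R^d$ where each $x_{i}$ is a (measurable) function of $x_1,\dots,x_{i-1}$ and the oracle responses at them; a randomized algorithm is the same except that each $x_i$ may also depend on a random seed $U$ independent of $f$. $\mathsf C_{\det}(\varepsilon;\beta,\Delta,d,\mathsf O)$ is the least $N$ such that some deterministic algorithm using $\mathsf O$ has, for every $f\in\mathcal F(\beta,\Delta,d)$, an $\varepsilon$-stationary point of $f$ among $x_1,\dots,x_N$; $\mathsf C_{\rm rand}(\varepsilon;\beta,\Delta,d,\mathsf O)$ is the least $N$ such that some randomized algorithm using $\mathsf O$ has, for every $f\in\mathcal F(\beta,\Delta,d)$,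 with probability at least $1/2$ an $\varepsilon$-stationary point of $f$ among $x_1,\dots,x_N$. Abbreviate $\mathsf C_*(\varepsilon;\mathsf O)=\mathsf C_*(\varepsilon;1,1,1,\mathsf O)$ (one-dimensional, $1$-smooth, objective gap at most $1$). *)

From HB Require Import structures.
From mathcomp Require Import all_boot all_order all_algebra.
From mathcomp Require Import all_classical all_reals all_analysis.

Set Implicit Arguments.
Unset Strict Implicit.
Unset Printing Implicit Defensive.

Import Order.TTheory GRing.Theory Num.Theory.
Import numFieldNormedType.Exports.
Local Open Scope classical_set_scope.
Local Open Scope ring_scope.

(* beta-smooth (d = 1): continuously differentiable with beta-Lipschitz
   derivative; the gradient is the derivative f^`(). *)
Definition smooth (R : realType) (beta : R) (f : R -> R) : Prop :=
  (forall x : R, derivable f x 1) /\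
  continuous (derive1 f) /\
  (forall x y : R, `|derive1 f x - derive1 f y| <= beta * `|x - y|).

(* f(0) - inf f <= Delta, i.e. f(0) - Delta is a lower bound of f. *)
Definition gap_le (R : realType) (Delta : R) (f : R -> R) : Prop :=
  forall x, f 0 - Delta <= f x.

Definition Fclass (R : realType) (beta Delta : R) (f : R -> R) : Prop :=
  smooth beta f /\ gap_le Delta f.

Definition stationary (R : realType) (eps : R) (f : R -> R) (x : R) : Prop :=
  `|derive1 f x| < eps.

(* A history entry: (query x, (f x, f' x)) -- the oracle O^{0th+1st}. *)
Definition entry (R : realType) := (R * (R * R))%type.

Definition oracle01 (R : realType) (f : R -> R) (x : R) : entry R :=
  (x, (f x, derive1 f x)).

(* Deterministic algorithm: query number i (0-indexed) is a function of the
   list of the i previous queries together with the oracle responses. *)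
Definition det_alg (R : realType) := nat -> seq (entry R) -> R.

Fixpoint det_hist (R : realType) (A : det_alg R) (f : R -> R) (n : nat)
  : seq (entry R) :=
  match n with
  | 0 => [::]
  | n'.+1 => let h := det_hist A f n' in rcons h (oracle01 f (A n' h))
  end.

Definition det_query (R : realType) (A : det_alg R) (f : R -> R) (i : nat) : R :=
  A i (det_hist A f i).

Definition det_achieves (R : realType) (eps : R) (N : nat) : Prop :=
  exists A : det_alg R, forall f, Fclass 1 1 f ->
    exists i, (i < N)%N /\ stationary eps f (det_query A f i).

Definition rand_alg (R : realType) (T : Type) := nat -> T -> seq (entry R) -> R.

Fixpoint rand_hist (R : realType) (T : Type) (A : rand_alg R T) (f : R -> R)
  (u : T) (n : nat) : seq (entry R) :=
  match n with
  | 0 => [::]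
  | n'.+1 => let h := rand_hist A f u n' in rcons h (oracle01 f (A n' u h))
  end.

Definition rand_query (R : realType) (T : Type) (A : rand_alg R T)
  (f : R -> R) (i : nat) (u : T) : R :=
  A i u (rand_hist A f u i).

(* For some probability space (T, P) carrying the seed U (independent of f),
   some randomized algorithm such that for every f in F(1,1,1) the query maps
   u |-> x_i(u) are measurable, finds an eps-stationary point among its first
   N queries with probability at least 1/2. *)
Definition rand_achieves (R : realType) (eps : R) (N : nat) : Prop :=
  exists (d : measure_display) (T : measurableType d) (P : probability T R)
         (A : rand_alg R T),
    forall f, Fclass 1 1 f ->
      (forall i, measurable_fun setT (rand_query A f i)) /\
      (P [set u | exists i, (i < N)%N /\ stationary eps f (rand_query A f i u)]
         >= (2^-1)%:E)%E.

(* Complexities: least such N (as an extended real; +oo if none). *)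
Definition C_det (R : realType) (eps : R) : \bar R :=
  ereal_inf [set (N%:R)%:E | N in [set N : nat | det_achieves eps N]].

Definition C_rand (R : realType) (eps : R) : \bar R :=
  ereal_inf [set (N%:R)%:E | N in [set N : nat | rand_achieves eps N]].

(* The lower bound comes from a resisting family. For n >= 1 the function
   [hard_fun eps n] is [-eps x] to the left and [eps x] to the right of a window
   of length about [4 eps n] around [2 eps n^2], with a smooth valley inside; it is
   1-smooth with gap at most 1 while [2 eps^2 n^2 <= 1], its eps-stationary points
   lie in its window, and the windows are pairwise disjoint. Outside its window
   every member answers [(x, (-eps x, -eps))] or [(x, (eps x, eps))]. So, for a
   fixed seed, the runs of an algorithm on the whole family branch at most three
   ways per query: after [i] queries there are at most [3^i] histories, hence at
   most [3^i] members are solved by query [i] and at most [3^N] within [N] queries.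
   Averaging over the seed, if each of [M ~ 1/(2 eps)] members is solved with
   probability 1/2 then [M/2 <= 3^N], i.e. [N >= log(1/eps) / 18]. *)

From mathcomp Require Import all_boot all_order all_algebra.
From mathcomp Require Import all_classical all_reals all_analysis.
From mathcomp Require Import lra ring zify.
From mathcomp Require Import measurable_realfun measurable_fun_approximation.
Import Order.TTheory GRing.Theory Num.Theory.
Import numFieldNormedType.Exports.
Local Open Scope classical_set_scope.
Local Open Scope ring_scope.

Set Implicit Arguments.
Unset Strict Implicit.

Lemma derive1_quadratic_bound (R : realType) (F D : R -> R) (x : R) :
  (forall y, `|F y - F x - D x * (y - x)| <= (y - x) ^+ 2) ->
  derivable F x 1 /\ derive1 F x = D x.
Proof.
move=> quadF.
have cvgD : (fun h : R => h^-1 *: (F (h *: 1 + x) - F x)) @ 0^' --> D x.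
  apply/cvgrPdist_lt => e e0; near=> h.
  have h0 : h != 0 by near: h; exact: nbhs_dnbhs_neq.
  have he : `|h| < e by near: h; apply: nbhs_dnbhs; exact: (@nbhs0_lt R R e e0).
  rewrite scaler1 /GRing.scale /=.
  have -> : D x - h^-1 * (F (h + x) - F x) = - h^-1 * (F (h + x) - F x - D x * h).
    by field.
  rewrite normrM normrN normrV ?unitfE // ltr_pdivrMl ?normr_gt0 //.
  have := quadF (h + x); rewrite addrK => /le_lt_trans; apply.
  by rewrite -(real_normK (num_real h)) expr2 ltr_pM2l ?normr_gt0.
split; first by apply/cvg_ex; exists (D x).
by apply: cvg_lim => //; under eq_fun do rewrite -[h in F (h + x)]scaler1.
Unshelve. all: by end_near.
Qed.

Section Valley.
Variables (R : realType) (eps t h : R).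
Hypotheses (eps_gt0 : 0 < eps) (h_ge0 : 0 <= h).

Definition valley_lo : R := t - eps.
Definition valley_mid : R := t + eps + h.
Definition valley_hi : R := t + eps + 2 * h.

(* The two quadratic pieces glue continuously at [valley_mid] exactly when
   [h * h = 2 * eps * t]; the minimum [eps^2/2 - eps t] is attained at [t]. *)
Definition valley (x : R) : R :=
  if x <= valley_lo then - (eps * x)
  else if x <= valley_mid then (x - t) * (x - t) / 2 + eps * eps / 2 - eps * t
  else if x <= valley_hi then eps * x - (x - valley_hi) * (x - valley_hi) / 2
  else eps * x.

Definition valley_slope (x : R) : R :=
  if x <= valley_lo then - eps
  else if x <= valley_mid then x - t
  else if x <= valley_hi then eps - (x - valley_hi)
  else eps.

Let mid_le_hi : valley_mid <= valley_hi.
Proof. by rewrite /valley_mid /valley_hi; move: h_ge0; lra. Qed.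

Local Ltac case_piece x :=
  case: (lerP x valley_lo); case: (lerP x valley_mid); case: (lerP x valley_hi).

Lemma valley_slope_lipschitz x y : `|valley_slope x - valley_slope y| <= `|x - y|.
Proof.
have lexy := ler_norm (x - y); have leyx : y - x <= `|x - y| by rewrite distrC ler_norm.
move: eps_gt0 h_ge0; rewrite /valley_slope ler_norml.
case_piece x; case_piece y; rewrite /valley_lo /valley_mid /valley_hi => *;
  apply/andP; split; lra.
Qed.

Lemma continuous_valley_slope : continuous valley_slope.
Proof.
move=> x; apply/cvgrPdist_lt => e e0.
have /cvgrPdist_lt/(_ e e0) := @cvg_id _ (nbhs x).
by apply: filterS => y; apply: le_lt_trans (valley_slope_lipschitz x y).
Qed.

Lemma valley_stationary x : `|valley_slope x| < eps -> valley_lo < x <= valley_hi.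
Proof.
move: eps_gt0 h_ge0; rewrite /valley_slope ltr_norml.
case_piece x; rewrite /valley_lo /valley_mid /valley_hi => *; apply/andP; lra.
Qed.

Lemma valley_left x : x <= valley_lo -> valley x = - (eps * x) /\ valley_slope x = - eps.
Proof. by move=> xlo; rewrite /valley /valley_slope xlo. Qed.

Lemma valley_right x : valley_hi < x -> valley x = eps * x /\ valley_slope x = eps.
Proof.
move=> hix; rewrite /valley /valley_slope; have /negbTE-> : ~~ (x <= valley_lo).
  rewrite -ltNge; apply: le_lt_trans hix.
  by rewrite /valley_lo /valley_hi; move: eps_gt0 h_ge0; lra.
have /negbTE-> : ~~ (x <= valley_mid) by rewrite -ltNge; apply: le_lt_trans hix.
by rewrite leNgt hix.
Qed.

Hypothesis hE : h * h = 2 * eps * t.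

Lemma valley_quadratic_bound x y :
  `|valley y - valley x - valley_slope x * (y - x)| <= (y - x) ^+ 2.
Proof.
have := sqr_ge0 (y - x); move: eps_gt0 h_ge0 hE; rewrite /valley /valley_slope expr2 ler_norml.
case_piece x; case_piece y; rewrite /valley_lo /valley_mid /valley_hi => *;
  apply/andP; split; nra.
Qed.

Lemma valley_ge_min x : eps * eps / 2 - eps * t <= valley x.
Proof.
have := sqr_ge0 (x - t); move: eps_gt0 h_ge0 hE; rewrite /valley expr2.
case_piece x; rewrite /valley_lo /valley_mid /valley_hi => *; nra.
Qed.

Lemma valley_derivable x : derivable valley x 1 /\ derive1 valley x = valley_slope x.
Proof.
apply: (@derive1_quadratic_bound _ _ valley_slope) => y.
exact: valley_quadratic_bound.
Qed.

End Valley.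

Section HardFamily.
Variables (R : realType) (eps : R).
Hypothesis eps_gt0 : 0 < eps.

(* The window of [n] is [eps (2n^2 - 1) < x <= eps (2n^2 + 4n + 1)], so
   consecutive windows abut without overlapping. *)
Definition hard_center (n : nat) : R := 2 * eps * (n%:R * n%:R).
Definition hard_width (n : nat) : R := 2 * eps * n%:R.
Definition hard_fun (n : nat) : R -> R := valley eps (hard_center n) (hard_width n).

Definition hard_region (n : nat) (x : R) : bool :=
  (valley_lo eps (hard_center n) < x) && (x <= valley_hi eps (hard_center n) (hard_width n)).

Let width_ge0 n : 0 <= hard_width n.
Proof. by rewrite /hard_width; move: eps_gt0 (ler0n R n); nra. Qed.

Let width_sqr n : hard_width n * hard_width n = 2 * eps * hard_center n.
Proof. by rewrite /hard_width /hard_center; ring. Qed.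

Lemma derive1_hard_fun n :
  derive1 (hard_fun n) = valley_slope eps (hard_center n) (hard_width n).
Proof.
by apply/funext => x; case: (valley_derivable eps_gt0 (width_ge0 n) (width_sqr n) x).
Qed.

Lemma continuous_derive1_hard_fun n : continuous (derive1 (hard_fun n)).
Proof. by rewrite derive1_hard_fun; exact: continuous_valley_slope (width_ge0 n). Qed.

Lemma hard_fun_in_class n : (0 < n)%N -> 2 * eps * eps * (n%:R * n%:R) <= 1 ->
  Fclass 1 1 (hard_fun n).
Proof.
move=> n_gt0 small; split; first split.
- by move=> x; case: (valley_derivable eps_gt0 (width_ge0 n) (width_sqr n) x).
- split; first exact: continuous_derive1_hard_fun.
  by move=> x y; rewrite derive1_hard_fun mul1r; exact: valley_slope_lipschitz.
- have lo_ge0 : 0 <= valley_lo eps (hard_center n).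
    have nn_ge1 : 1 <= n%:R * n%:R :> R by rewrite -natrM ler1n muln_gt0 n_gt0.
    by rewrite /valley_lo /hard_center; move: eps_gt0 nn_ge1; nra.
  have [f0 _] := valley_left (hard_width n) lo_ge0.
  move=> x; rewrite /hard_fun f0 mulr0 oppr0 sub0r.
  have := valley_ge_min eps_gt0 (width_ge0 n) (width_sqr n) x.
  by rewrite /hard_center; move: small eps_gt0; nra.
Qed.

Lemma hard_region_inj n m x : hard_region n x -> hard_region m x -> n = m.
Proof.
suff lt_disjoint k l : (k < l)%N -> hard_region k x -> hard_region l x -> False.
  move=> rn rm; case: (ltngtP n m) => // [nm | mn].
  - by case: (lt_disjoint _ _ nm rn rm).
  - by case: (lt_disjoint _ _ mn rm rn).
move=> kl /andP [lo_k hi_k] /andP [lo_l hi_l].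
have kl' : k%:R + 1 <= l%:R :> R by rewrite natr1 ler_nat.
move: kl' (ler0n R k) lo_k hi_k lo_l hi_l eps_gt0.
rewrite /valley_lo /valley_hi /hard_center /hard_width; nra.
Qed.

Lemma oracle01_hard_fun n x :
  [\/ oracle01 (hard_fun n) x = (x, (- (eps * x), - eps)),
      oracle01 (hard_fun n) x = (x, (eps * x, eps)) | hard_region n x].
Proof.
rewrite /oracle01 derive1_hard_fun /hard_fun.
case: (lerP x (valley_lo eps (hard_center n))) => [xlo | lox].
  by apply: Or31; case: (valley_left (hard_width n) xlo) => -> ->.
case: (lerP x (valley_hi eps (hard_center n) (hard_width n))) => [xhi | hix].
  by apply: Or33; rewrite /hard_region lox xhi.
by apply: Or32; case: (valley_right eps_gt0 (width_ge0 n) hix) => -> ->.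
Qed.

Lemma hard_fun_stationary n x : stationary eps (hard_fun n) x -> hard_region n x.
Proof. by rewrite /stationary derive1_hard_fun => /valley_stationary; apply. Qed.

End HardFamily.

Lemma sum_expn_le (b N : nat) : (1 < b)%N -> (\sum_(i < N) b ^ i <= b ^ N)%N.
Proof.
move=> b_gt1; elim: N => [|N IH]; first by rewrite big_ord0.
rewrite big_ord_recr /= expnSr; move: IH.
by set X := (b ^ N)%N; set S := (\sum_(i < N) _)%N; nia.
Qed.

Section QueryCounting.
Variables (R : realType) (T : Type) (A : rand_alg R T) (u : T) (eps : R).
Variables (f : nat -> R -> R) (region : nat -> R -> bool).
Variables (left_resp right_resp : R -> entry R).
Hypothesis oracle01_f : forall j x,
  [\/ oracle01 (f j) x = left_resp x, oracle01 (f j) x = right_resp x | region j x].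
Hypothesis region_inj : forall j k x, region j x -> region k x -> j = k.
Hypothesis stationary_region : forall j x, stationary eps (f j) x -> region j x.
Variable s : seq nat.
Hypothesis s_uniq : uniq s.

Definition region_resp (x : R) : entry R :=
  oracle01 (f (nth 0%N s (find (region^~ x) s))) x.

Definition resp (k : nat) : R -> entry R :=
  match k with 0 => left_resp | 1 => right_resp | _ => region_resp end.

Lemma oracle01_resp j x : j \in s ->
  exists2 k, k \in iota 0 3 & oracle01 (f j) x = resp k x.
Proof.
move=> js; case: (oracle01_f j x) => [->|->|rj]; first by exists 0%N.
  by exists 1%N.
exists 2%N => //=; rewrite /region_resp.
have /(nth_find 0%N) rk : has (region^~ x) s by apply/hasP; exists j.
by rewrite (region_inj rk rj).
Qed.

Lemma size_undup_rand_hist i :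
  (size (undup [seq rand_hist A (f j) u i | j <- s]) <= 3 ^ i)%N.
Proof.
elim: i => [|i IH].
  apply: (@leq_trans (size [:: [::] : seq (entry R)])) => //.
  by apply: uniq_leq_size (undup_uniq _) _ => x; rewrite mem_undup => /mapP [j _ ->].
set H := undup _ in IH.
pose ext := [seq rcons h (resp k (A i u h)) | h <- H, k <- iota 0 3].
apply: (@leq_trans (size ext)); last first.
  by rewrite size_allpairs size_iota expnSr leq_mul2r IH orbT.
apply: uniq_leq_size (undup_uniq _) _ => x; rewrite mem_undup => /mapP [j js ->] /=.
have hj : rand_hist A (f j) u i \in H by rewrite mem_undup; apply: map_f.
have [k k3 ->] := oracle01_resp (A i u (rand_hist A (f j) u i)) js.
exact: (allpairs_f (fun h k => rcons h (resp k (A i u h))) hj k3).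
Qed.

Lemma count_stationary_query i :
  (count (fun j => (`|derive1 (f j) (rand_query A (f j) i u)| < eps)%R) s <= 3 ^ i)%N.
Proof.
apply: leq_trans (size_undup_rand_hist i).
set P := fun j => _; rewrite -size_filter.
pose q j := rand_query A (f j) i u.
have q_inj : {in [seq j <- s | P j] &, injective q}.
  move=> j k; rewrite !mem_filter => /andP [Pj _] /andP [Pk _] qjk.
  apply: (region_inj (stationary_region Pj)); rewrite /q in qjk; rewrite qjk.
  exact: stationary_region.
rewrite -(size_map q) -(size_map (A i u)).
apply: uniq_leq_size; first by rewrite (map_inj_in_uniq q_inj) filter_uniq.
move=> x /mapP [j]; rewrite mem_filter => /andP [_ js] ->.
by apply: map_f; rewrite mem_undup; exact: map_f.
Qed.

Lemma count_stationary_runs N :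
  (\sum_(j <- s) [exists i : 'I_N, `|derive1 (f j) (rand_query A (f j) i u)| < eps]%R
     <= 3 ^ N)%N.
Proof.
apply: leq_trans (sum_expn_le N (isT : (1 < 3)%N)).
apply: (@leq_trans (\sum_(j <- s) \sum_(i < N)
    ((`|derive1 (f j) (rand_query A (f j) i u)| < eps)%R : nat))).
  apply: leq_sum => j _; case: existsP => [[i Pi]|_] //.
  by rewrite (bigD1 i) //= Pi.
rewrite exchange_big /=; apply: leq_sum => i _.
apply: leq_trans (count_stationary_query i).
rewrite -sum1_count big_mkcond /=; apply: eq_leq; rewrite [RHS]big_mkcond /=.
by apply: eq_bigr => j _; case: ifP.
Qed.

End QueryCounting.

Lemma sum_probability_le_count d (T : measurableType d) (R : realType)
    (P : probability T R) (S : nat -> set T) (M : nat) (K : R) :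
  (forall j, (j < M)%N -> measurable (S j)) ->
  (forall u, \sum_(j < M) \1_(S j) u <= K) ->
  (\sum_(j < M) P (S j) <= K%:E)%E.
Proof.
move=> S_meas countK.
have ind_meas (j : 'I_M) : measurable_fun setT (fun u => (\1_(S j) u : R)%:E).
  by apply/measurable_EFinP; exact/measurable_indic/S_meas.
have -> : (\sum_(j < M) P (S j) = \int[P]_u \sum_(j < M) (\1_(S j) u)%:E)%E.
  rewrite ge0_integral_sum //.
  by apply: eq_bigr => j _; rewrite integral_indic ?setIT //; exact: S_meas.
apply: le_trans (_ : \int[P]_u (cst K%:E u) <= _)%E; last first.
  rewrite integral_cst // -[leRHS]mule1 le_eqVlt; apply/orP; left; apply/eqP.
  by congr (_ * _)%E; exact: probability_setT.
apply: ge0_le_integral => //.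
- by move=> u _; apply: sume_ge0 => j _; rewrite lee_fin.
- exact: emeasurable_sum.
- by move=> u _; rewrite sumEFin lee_fin.
Qed.

Lemma measurable_small_value_event d (T : measurableType d) (R : realType)
    (g : R -> R) (q : nat -> T -> R) (eps : R) (N : nat) :
  continuous g -> (forall i, measurable_fun setT (q i)) ->
  measurable [set u | exists i, (i < N)%N /\ `|g (q i u)| < eps].
Proof.
move=> g_cont q_meas.
have -> : [set u | exists i, (i < N)%N /\ `|g (q i u)| < eps] =
    \bigcup_(i in [set i | (i < N)%N]) (setT `&` (g \o q i) @^-1` `]-eps, eps[).
  apply/seteqP; split => u /=.
  - by case=> i [iN small]; exists i => //; split => //=; rewrite in_itv /= -ltr_norml.
  - by case=> i iN [_ /=]; rewrite in_itv /= -ltr_norml; exists i.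
apply: bigcup_measurable => i _; apply: measurableT_comp => //.
exact: continuous_measurable_fun.
Qed.

Lemma rand_achieves_of_det (R : realType) (eps : R) (N : nat) :
  det_achieves eps N -> rand_achieves eps N.
Proof.
case=> A achA; pose B : rand_alg R R := fun i _ h => A i h.
have queryB f i : rand_query B f i = fun=> det_query A f i.
  have histB n u : rand_hist B f u n = det_hist A f n by elim: n => //= n ->.
  by apply/funext => u; rewrite /rand_query /det_query histB.
exists _, R, (\d_(0 : R) : probability R R), B => f f_class.
split=> [i|]; first by rewrite queryB; exact: measurable_cst.
have [i [iN stat]] := achA f f_class.
have -> : [set u | exists i, (i < N)%N /\ stationary eps f (rand_query B f i u)] = setT.
  by apply/seteqP; split => // u _; exists i; rewrite queryB.
by rewrite probability_setT lee_fin invf_le1 // ler1n.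
Qed.

Section LowerBound.
Variable R : realType.

Lemma rand_achieves_pow3 (eps : R) (N M : nat) : 0 < eps ->
  2 * eps * eps * (M%:R * M%:R) <= 1 -> rand_achieves eps N ->
  M%:R / 2 <= (3 ^ N)%:R :> R.
Proof.
move=> eps_gt0 M_small [d [T [P [A achA]]]].
pose f j := hard_fun eps j.+1.
have f_class j : (j < M)%N -> Fclass 1 1 (f j).
  move=> jM; apply: hard_fun_in_class => //; apply: le_trans M_small.
  have jM' : j.+1%:R <= M%:R :> R by rewrite ler_nat.
  have eps2_ge0 : 0 <= 2 * eps * eps by move: eps_gt0; nra.
  by rewrite ler_wpM2l // ler_pM.
pose S j := [set u | exists i, (i < N)%N /\ stationary eps (f j) (rand_query A (f j) i u)].
have S_meas j : (j < M)%N -> measurable (S j).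
  move=> jM; have [q_meas _] := achA _ (f_class j jM).
  rewrite /S /stationary; apply: measurable_small_value_event q_meas.
  exact: continuous_derive1_hard_fun.
have S_count u : \sum_(j < M) \1_(S j) u <= (3 ^ N)%:R :> R.
  have mem_S j : (u \in S j) =
      [exists i : 'I_N, `|derive1 (f j) (rand_query A (f j) i u)| < eps].
    apply/idP/existsP; rewrite inE.
    - by case=> i [iN stat]; exists (Ordinal iN).
    - by case=> i stat; exists i.
  under eq_bigr do rewrite indicE mem_S.
  have runs := count_stationary_runs A u
    (region := fun j => hard_region eps j.+1)
    (left_resp := fun x => (x, (- (eps * x), - eps)))
    (right_resp := fun x => (x, (eps * x, eps)))
    (fun j x => oracle01_hard_fun eps_gt0 j.+1 x)
    (fun j k x rj rk => succn_inj (hard_region_inj eps_gt0 rj rk))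
    (fun j x => @hard_fun_stationary _ _ eps_gt0 j.+1 x)
    (iota_uniq 0 (M - 0) : uniq (index_iota 0 M)) N.
  by rewrite -natr_sum ler_nat; apply: leq_trans runs; rewrite big_mkord.
have := sum_probability_le_count P S_meas S_count.
have S_half : (\sum_(j < M) (2^-1)%:E <= \sum_(j < M) P (S j))%E.
  by apply: lee_sum => j _; have [] := achA _ (f_class j (ltn_ord j)).
move=> /(le_trans S_half).
by rewrite sumEFin sumr_const card_ord lee_fin -[_ *+ M]mulr_natl.
Qed.

Lemma rand_achieves_inv_lt (eps : R) (N : nat) : 0 < eps -> rand_achieves eps N ->
  eps^-1 < 6 * (3 ^ N)%:R.
Proof.
move=> eps_gt0 achN.
have inv_ge0 : 0 <= (2 * eps)^-1 by rewrite invr_ge0; lra.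
have /andP [M_le M_gt] := truncn_itv inv_ge0; set M := Num.trunc _ in M_le M_gt.
have M_small : 2 * eps * eps * (M%:R * M%:R) <= 1.
  have a_le1 : M%:R * (2 * eps) <= 1 by rewrite -ler_pdivlMr ?mul1r //; lra.
  have a_ge0 : 0 <= M%:R * (2 * eps) by rewrite mulr_ge0 //; lra.
  by have := mulr_ile1 a_ge0 a_ge0 a_le1 a_le1; nra.
have := rand_achieves_pow3 eps_gt0 M_small achN.
have : 1 <= (3 ^ N)%:R :> R by rewrite ler1n expn_gt0.
move: M_gt; rewrite invfM -[M.+1%:R]natr1; lra.
Qed.

Lemma rand_achieves_ln_le (eps : R) (N : nat) : 0 < eps -> eps < 8^-1 ->
  rand_achieves eps N -> ln (eps^-1) <= 18 * N%:R.
Proof.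
move=> eps_gt0 eps_lt achN; have inv_lt := rand_achieves_inv_lt eps_gt0 achN.
have inv_gt8 : 8 < eps^-1 by rewrite -[8]invrK ltf_pV2 ?posrE ?invr_gt0.
have N_gt0 : (0 < N)%N by case: N inv_lt {achN} => // /=; rewrite expn0 mulr1; lra.
have inv_le : eps^-1 <= 18 ^+ N.
  have -> : 18 ^+ N = 6 ^+ N * 3 ^+ N :> R by rewrite -exprMn; congr (_ ^+ _); lra.
  rewrite natrX in inv_lt; apply/ltW/(lt_le_trans inv_lt)/ler_wpM2r; first exact: exprn_ge0.
  by rewrite -[leLHS]expr1 ler_eXn2l //; lra.
have ln18 : ln (18 : R) < 18 by apply: ln_sublinear.
have : ln (eps^-1) <= ln (18 : R) *+ N.
  by rewrite -lnXn ?ler_ln ?posrE ?invr_gt0.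
by rewrite -[ln _ *+ N]mulr_natr; move: (ler0n R N); nra.
Qed.

End LowerBound.

Theorem theorem2p4 (R : realType) :
  exists c : R, 0 < c /\
    forall eps : R, 0 < eps -> eps < 8^-1 ->
      (C_rand eps <= C_det eps)%E /\
      ((c * ln (eps^-1))%:E <= C_rand eps)%E.
Proof.
exists 18^-1; split=> [|eps eps_gt0 eps_lt]; first by rewrite invr_gt0.
split.
- apply: ereal_inf_le_tmp => _ [N detN <-]; exists N => //.
  exact: rand_achieves_of_det.
- apply: le_ereal_inf_tmp => _ [N randN <-]; rewrite lee_fin.
  by have := rand_achieves_ln_le eps_gt0 eps_lt randN; lra.
Qed.
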